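(* Let $R$ be a $K$-ring with a degree function such that $R\neq K$. Then every connected component of the projective line $\mathbb{P}(R)$ has infinite diameter.
   Context: A ring $R$ (associative, with $1$, unit group $R^*$) is a $K$-ring with a degree function if $K:=R^*\cup\{0\}$ is a (not necessarily commutative) field and there is a function $\deg:R\to\{-\infty\}\cup\{0,1,2,\dots\}$ with: $\deg a=-\infty$ iff $a=0$; $\deg a=0$ iff $a\in R^*$; $\deg(a+b)\le\max\{\deg a,\deg b\}$; $\deg(ab)=\deg a+\deg b$, for all $a,b\in R$. A pair $(a,b)\in R^2$ is admissible if it is the first row of an invertible $2\times2$ matrix over $R$; $\mathbb{P}(R)$ is the set of cyclic submodules $R(a,b)$ of the left module $R^2$ with $(a,b)$ admissible. Two points $R(a,b)$, $R(c,d)$ are distant iff $\begin{pmatrix}a&b\\c&d\end{pmatrix}$ is invertible; connected components and diameter (supremum of path distances within a component) refer to the graph on $\mathbb{P}(R)$ whose edges are pairs of distant points. *)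

From HB Require Import structures.
From mathcomp Require Import all_boot all_order all_algebra.
Set Implicit Arguments. Unset Strict Implicit. Unset Printing Implicit Defensive.
Import GRing.Theory.
Local Open Scope ring_scope.

Section KRing.
Variable R : unitRingType.

Definition inK (a : R) : Prop := a = 0 \/ a \is a GRing.unit.

Definition K_is_field : Prop :=
  inK 0 /\ inK 1 /\
  (forall a b, inK a -> inK b -> inK (a + b)) /\
  (forall a, inK a -> inK (- a)) /\
  (forall a b, inK a -> inK b -> inK (a * b)) /\
  (forall a, inK a -> a <> 0 -> exists2 b, inK b & (a * b = 1 /\ b * a = 1)).

(* degrees in {-oo} u N : None = -oo *)
Definition deg_le (x y : option nat) : bool :=
  match x, y with
  | None, _ => true
  | Some _, None => false
  | Some m, Some n => (m <= n)%N
  end.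
Definition deg_max (x y : option nat) : option nat :=
  match x, y with
  | None, _ => y
  | _, None => x
  | Some m, Some n => Some (maxn m n)
  end.
Definition deg_add (x y : option nat) : option nat :=
  match x, y with
  | Some m, Some n => Some (m + n)%N
  | _, _ => None
  end.

Definition is_degree_function (deg : R -> option nat) : Prop :=
  [/\ (forall a, deg a = None <-> a = 0),
      (forall a, deg a = Some 0%N <-> a \is a GRing.unit),
      (forall a b, deg_le (deg (a + b)) (deg_max (deg a) (deg b))) &
      (forall a b, deg (a * b) = deg_add (deg a) (deg b))].

Definition invertible2 (a b c d : R) : Prop :=
  exists x y z w : R,
    (a * x + b * z = 1 /\ a * y + b * w = 0 /\ c * x + d * z = 0 /\ c * y + d * w = 1) /\
    (x * a + y * c = 1 /\ x * b + y * d = 0 /\ z * a + w * c = 0 /\ z * b + w * d = 1).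

Definition admissible (a b : R) : Prop := exists c d, invertible2 a b c d.

Definition cyc (a b : R) : R * R -> Prop := fun v => exists r : R, v = (r * a, r * b).

Definition is_point (p : R * R -> Prop) : Prop :=
  exists a b, admissible a b /\ p = cyc a b.

Definition distant (p q : R * R -> Prop) : Prop :=
  exists a b c d, [/\ p = cyc a b, q = cyc c d & invertible2 a b c d].

Inductive walk : nat -> (R * R -> Prop) -> (R * R -> Prop) -> Prop :=
  | walk0 p : is_point p -> walk 0 p p
  | walkS n p q r : is_point p -> distant p q -> walk n q r -> walk n.+1 p r.

Definition connected (p q : R * R -> Prop) : Prop := exists n, walk n p q.

Definition dist_le (p q : R * R -> Prop) (n : nat) : Prop :=
  exists2 m, (m <= n)%N & walk m p q.

End KRing.

From HB Require Import structures.
From mathcomp Require Import all_boot all_order all_algebra zify.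
Set Implicit Arguments. Unset Strict Implicit. Unset Printing Implicit Defensive.
Import GRing.Theory.
Local Open Scope ring_scope.

(* Write the base point as R(a0, b0) with [c0 d0; a0 b0] invertible, and let
   (X0, Z0) be the first column of its inverse.  A chain is a sequence of rows
   v_(-1) = (c0, d0), v_0 = (a0, b0), v_(k+1) = x_k v_k - v_(k-1) with x_k
   outside K for k >= 1; consecutive terms are rows of invertible matrices, so
   R v_0, R v_1, ... is a walk.  The form l(r1, r2) = r1 X0 + r2 Z0 has
   strictly increasing degree along a chain, so only v_0 spans the base point.
   A point distant from R v_(N+1) is spanned by al v_N + be v_(N+1) with al a
   unit, and this is again (up to a unit) the term of index N, N + 1 or N + 2
   of a modified chain.  Hence reaching the base point from R v_N takes at
   least N steps, and R v_(n+1) lies at distance > n from the base point. *)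

Section TwoByTwo.
Variable R : unitRingType.

Definition mx2 (a b c d : R) : 'M[R]_2 :=
  \matrix_(i, j) if i == ord0 then (if j == ord0 then a else b)
                 else (if j == ord0 then c else d).

Lemma ord2P (i : 'I_2) : i = ord0 \/ i = ord_max.
Proof. by case: i => [[|[|i]] Hi] //; [left|right]; apply: val_inj. Qed.

Lemma mx2_eta (M : 'M[R]_2) :
  M = mx2 (M ord0 ord0) (M ord0 ord_max) (M ord_max ord0) (M ord_max ord_max).
Proof.
by apply/matrixP => i j; rewrite !mxE; case: (ord2P i) => ->; case: (ord2P j) => ->.
Qed.

Lemma mx2_inj a b c d a' b' c' d' :
  mx2 a b c d = mx2 a' b' c' d' -> [/\ a = a', b = b', c = c' & d = d'].
Proof.
move=> E; have Eij i j : mx2 a b c d i j = mx2 a' b' c' d' i j by rewrite E.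
move: (Eij ord0 ord0) (Eij ord0 ord_max) (Eij ord_max ord0) (Eij ord_max ord_max).
by rewrite !mxE.
Qed.

Lemma mul_mx2 a b c d x y z w :
  mx2 a b c d *m mx2 x y z w =
  mx2 (a * x + b * z) (a * y + b * w) (c * x + d * z) (c * y + d * w).
Proof.
apply/matrixP => i j; rewrite !mxE big_ord_recl big_ord1 !mxE.
by case: (ord2P i) => ->; case: (ord2P j) => ->.
Qed.

Lemma mx2_1 : (1%:M : 'M[R]_2) = mx2 1 0 0 1.
Proof.
by apply/matrixP => i j; rewrite !mxE; case: (ord2P i) => ->; case: (ord2P j) => ->.
Qed.

Definition invertible_mx n (M : 'M[R]_n) : Prop :=
  exists N, M *m N = 1%:M /\ N *m M = 1%:M.

Lemma invertible_mul n (A B : 'M[R]_n) :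
  invertible_mx A -> invertible_mx B -> invertible_mx (A *m B).
Proof.
move=> [A' [AA' A'A]] [B' [BB' B'B]]; exists (B' *m A'); split.
  by rewrite mulmxA -(mulmxA A) BB' mulmx1 AA'.
by rewrite mulmxA -(mulmxA B') A'A mulmx1 B'B.
Qed.

Lemma invertible2P a b c d : invertible2 a b c d <-> invertible_mx (mx2 a b c d).
Proof.
split.
  move=> [x [y [z [w [[h1 [h2 [h3 h4]]] [h5 [h6 [h7 h8]]]]]]]].
  by exists (mx2 x y z w); rewrite !mul_mx2 mx2_1 h1 h2 h3 h4 h5 h6 h7 h8.
move=> [N []]; rewrite (mx2_eta N) !mul_mx2 mx2_1.
move=> /mx2_inj [h1 h2 h3 h4] /mx2_inj [h5 h6 h7 h8].
by do 4 eexists; split; (split; [|split; [|split]]); eassumption.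
Qed.

Lemma invertible_swap a b c d :
  invertible_mx (mx2 a b c d) -> invertible_mx (mx2 c d a b).
Proof.
have swap_mul : mx2 0 1 1 0 *m mx2 a b c d = mx2 c d a b.
  by rewrite mul_mx2 !mul0r !mul1r !add0r !addr0.
move=> H; rewrite -swap_mul; apply: invertible_mul H.
by exists (mx2 0 1 1 0); rewrite mul_mx2 mx2_1 !mul0r !mul1r !add0r !addr0.
Qed.

Lemma invertible_step a b c d x :
  invertible_mx (mx2 a b c d) -> invertible_mx (mx2 c d (x * c - a) (x * d - b)).
Proof.
have step_mul : mx2 0 1 (-1) x *m mx2 a b c d = mx2 c d (x * c - a) (x * d - b).
  by rewrite mul_mx2 !mul0r !mul1r !add0r !mulN1r ![- _ + _]addrC.
move=> H; rewrite -step_mul; apply: invertible_mul H.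
exists (mx2 x (-1) 1 0).
rewrite !mul_mx2 mx2_1 !mul0r !mulr0 !mul1r !mulr1 !mulN1r !add0r !addr0.
by rewrite opprK addNr subrr.
Qed.

Lemma invertible_rinv a b c d : invertible_mx (mx2 a b c d) ->
  exists X Y Z W,
    [/\ a * X + b * Z = 1, a * Y + b * W = 0, c * X + d * Z = 0 & c * Y + d * W = 1].
Proof.
move=> [N [+ _]]; rewrite (mx2_eta N) mul_mx2 mx2_1 => /mx2_inj [E1 E2 E3 E4].
by do 4 eexists; split; eassumption.
Qed.

End TwoByTwo.

Section DistantGraph.
Variable R : unitRingType.
Implicit Types p q r : R * R -> Prop.

Lemma distant_sym p q : distant p q -> distant q p.
Proof.
move=> [a [b [c [d [-> -> /invertible2P H]]]]]; exists c, d, a, b; split => //.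
exact/invertible2P/invertible_swap.
Qed.

Lemma invertible_rows_distant (w1 w2 v1 v2 : R) :
  invertible_mx (mx2 w1 w2 v1 v2) ->
  [/\ is_point (cyc w1 w2), is_point (cyc v1 v2) & distant (cyc w1 w2) (cyc v1 v2)].
Proof.
move=> H; have Hs := invertible_swap H.
split; last by exists w1, w2, v1, v2; split => //; apply/invertible2P.
- by exists w1, w2; split => //; exists v1, v2; apply/invertible2P.
- by exists v1, v2; split => //; exists w1, w2; apply/invertible2P.
Qed.

Lemma walk_rcons n p q r : walk n p q -> distant q r -> is_point r -> walk n.+1 p r.
Proof.
elim=> {n p q} [p Hp|n p q q' Hp Hd _ IH] Hqr Hr; last exact: walkS Hp Hd (IH Hqr Hr).
exact: walkS Hp Hqr (walk0 Hr).
Qed.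

Lemma walk_rev n p q : walk n p q -> walk n q p.
Proof.
elim=> {n p q} [p Hp|n p q r Hp Hd _ IH]; first exact: walk0.
exact: walk_rcons IH (distant_sym Hd) Hp.
Qed.

Lemma walk0_eq p q : walk 0 p q -> p = q.
Proof. by move E: 0%N => n Hw; case: Hw E. Qed.

Lemma walkS_first n p r : walk n.+1 p r -> exists2 q, distant p q & walk n q r.
Proof. by move E: n.+1 => m Hw; case: Hw E => // m' p' q r' _ Hd Hw [->]; exists q. Qed.

End DistantGraph.

Section DegreeFunction.
Variable R : unitRingType.
Variable deg : R -> option nat.
Hypothesis Hdeg : is_degree_function deg.

Definition deg_lt (x y : option nat) : bool := ~~ deg_le y x.

Lemma deg0 : deg 0 = None.
Proof. by case: Hdeg => Hz _ _ _; apply/Hz. Qed.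

Lemma deg_unit a : a \is a GRing.unit -> deg a = Some 0%N.
Proof. by case: Hdeg => _ Hu _ _ /Hu. Qed.

Lemma deg_opp a : deg (- a) = deg a.
Proof.
case: Hdeg => _ _ _ Hmul.
by rewrite -mulN1r Hmul (deg_unit (unitrN1 _)); case: (deg a).
Qed.

Lemma deg_add_lt a b : deg_lt (deg a) (deg b) -> deg (a + b) = deg b.
Proof.
case: Hdeg => _ _ Hult _.
have := Hult a b; have := Hult (a + b) (- a).
rewrite [a + b]addrC addrK deg_opp.
by case: (deg a) => [m|]; case: (deg b) => [n|]; case: (deg (b + a)) => [k|] //=;
  rewrite /deg_lt /= => *; (congr Some || exfalso); lia.
Qed.

Lemma notK_deg (x : R) : ~ inK x <-> deg_lt (Some 0%N) (deg x).
Proof.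
case: Hdeg => Hz Hu _ _; split.
  move=> HxK; case E: (deg x) => [[|m]|] //.
  - by case: HxK; right; apply/Hu.
  - by case: HxK; left; apply/Hz.
by move=> Hx [/Hz E|/Hu E]; rewrite E in Hx.
Qed.

Lemma right_inverse_unit (a b : R) : a * b = 1 -> a \is a GRing.unit.
Proof.
case: Hdeg => _ Hu _ Hmul E; apply/Hu.
move: (Hmul a b); rewrite E (deg_unit (unitr1 _)).
by case: (deg a) => [m|]; case: (deg b) => [n|] //= [] ?; congr Some; lia.
Qed.

Lemma notK_subK (x k : R) : ~ inK x -> inK k -> ~ inK (x - k).
Proof.
move=> /notK_deg Hx Hk; apply/notK_deg.
have Hk0 : deg_le (deg (- k)) (Some 0%N).
  by rewrite deg_opp; case: Hk => [->|/deg_unit ->]; rewrite ?deg0.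
rewrite addrC deg_add_lt //; move: Hx Hk0.
by rewrite /deg_lt; case: (deg x) => [m|]; case: (deg (- k)) => [n|] //=; lia.
Qed.

Lemma deg_lt_step x a b :
  ~ inK x -> deg_lt (deg a) (deg b) -> deg_lt (deg b) (deg (x * b - a)).
Proof.
case: Hdeg => _ _ _ Hmul; move=> /notK_deg Hx Hab.
have Hxb : deg_lt (deg b) (deg (x * b)).
  by rewrite Hmul; move: Hx Hab; rewrite /deg_lt;
    case: (deg x) => [m|]; case: (deg a) => [k|]; case: (deg b) => [n|] //=; lia.
rewrite addrC deg_add_lt // deg_opp; move: Hab Hxb; rewrite /deg_lt.
by case: (deg a) => [k|]; case: (deg b) => [n|]; case: (deg (x * b)) => [j|] //=; lia.
Qed.

End DegreeFunction.

Section Neighbours.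
Variable R : unitRingType.

Definition represents (q : R * R -> Prop) (v1 v2 : R) : Prop :=
  exists2 e, e \is a GRing.unit & q = cyc (e * v1) (e * v2).

Lemma cyc_self (a b : R) : cyc a b (a, b).
Proof. by exists 1; rewrite !mul1r. Qed.

Lemma represents_self (v1 v2 : R) : represents (cyc v1 v2) v1 v2.
Proof. by exists 1; rewrite ?unitr1 ?mul1r. Qed.

(* Coordinates with respect to the basis [w; v] of R^2: if [h v; c d] is
   invertible, then (c, d) = al w + be v where [0 h; al be] is invertible. *)
Lemma neighbour_coords (w1 w2 v1 v2 h c d : R) :
  invertible_mx (mx2 w1 w2 v1 v2) -> invertible_mx (mx2 (h * v1) (h * v2) c d) ->
  exists al be, [/\ invertible_mx (mx2 0 h al be),
                    c = al * w1 + be * v1 & d = al * w2 + be * v2].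
Proof.
move=> [Ai [AAi AiA]] HB; set A := mx2 w1 w2 v1 v2 in AAi AiA.
set B := mx2 (h * v1) (h * v2) c d in HB *.
have Ai_inv : invertible_mx Ai by exists A.
have BAiA : B *m Ai *m A = B by rewrite -mulmxA AiA mulmx1.
move: AAi; rewrite (mx2_eta Ai) mul_mx2 mx2_1 => /mx2_inj [_ _ v_X v_Y].
set X := Ai ord0 ord0 in v_X *; set Y := Ai ord0 ord_max in v_Y *.
set Z := Ai ord_max ord0 in v_X *; set W := Ai ord_max ord_max in v_Y *.
have BAi : B *m Ai = mx2 0 h (c * X + d * Z) (c * Y + d * W).
  by rewrite (mx2_eta Ai) mul_mx2 -!mulrA -!mulrDr v_X v_Y mulr0 mulr1.
exists (c * X + d * Z), (c * Y + d * W); split.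
- by rewrite -BAi; apply: invertible_mul.
- by move: BAiA; rewrite BAi mul_mx2 => /mx2_inj [_ _ -> _].
- by move: BAiA; rewrite BAi mul_mx2 => /mx2_inj [_ _ _ ->].
Qed.

Hypothesis rinv_unit : forall a b : R, a * b = 1 -> a \is a GRing.unit.

Lemma corner_unit (h al be : R) :
  h \is a GRing.unit -> invertible_mx (mx2 0 h al be) -> al \is a GRing.unit.
Proof.
move=> Hh [D [+ _]]; rewrite (mx2_eta D) mul_mx2 mx2_1 => /mx2_inj [_ E01 _ E11].
move: E01; rewrite mul0r add0r -(mulr0 h) => /(mulrI Hh) D11.
by move: E11; rewrite D11 mulr0 addr0 => /rinv_unit.
Qed.

Lemma same_cyc_unit (a b a' b' Y W : R) :
  a' * Y + b' * W = 1 -> cyc a b = cyc a' b' ->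
  exists2 g, g \is a GRing.unit & a = g * a' /\ b = g * b'.
Proof.
move=> Hunim E.
have [r [Ea Eb]] : cyc a' b' (a, b) by rewrite -E; exact: cyc_self.
have [t [Ea' Eb']] : cyc a b (a', b') by rewrite E; exact: cyc_self.
have tra' : t * r * a' = a' by rewrite -mulrA -Ea -Ea'.
have trb' : t * r * b' = b' by rewrite -mulrA -Eb -Eb'.
have tr1 : t * r = 1 by rewrite -[t * r]mulr1 -Hunim mulrDr !mulrA tra' trb'.
by exists r; rewrite // -(unitrMr r (rinv_unit tr1)) tr1 unitr1.
Qed.

Lemma distant_neighbour (w1 w2 v1 v2 : R) q q' :
  invertible_mx (mx2 w1 w2 v1 v2) -> represents q v1 v2 -> distant q q' ->
  exists al be, al \is a GRing.unit /\ q' = cyc (al * w1 + be * v1) (al * w2 + be * v2).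
Proof.
move=> HA [e He ->] [a [b [c [d [Eq -> /invertible2P HB]]]]].
have [_ [Y [_ [W [_ _ _ Hunim]]]]] := invertible_rinv HA.
have Hunim' : (e * v1) * (Y / e) + (e * v2) * (W / e) = 1.
  by rewrite !mulrA -mulrDl -!(mulrA e) -mulrDr Hunim mulr1 mulrV.
have [g Hg [Ea Eb]] := same_cyc_unit Hunim' (esym Eq).
move: HB; rewrite Ea Eb !mulrA => HB.
have [al [be [Hc -> ->]]] := neighbour_coords HA HB.
by exists al, be; split => //; apply: corner_unit Hc; rewrite unitrMl.
Qed.

End Neighbours.

Section Chains.
Variable R : unitRingType.
Variable deg : R -> option nat.
Hypothesis Hdeg : is_degree_function deg.
Variables c0 d0 a0 b0 : R.
Hypothesis base_invertible : invertible_mx (mx2 c0 d0 a0 b0).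

(* [chain N w1 w2 v1 v2]: (w, v) = (v_(N-1), v_N) are consecutive terms of a
   sequence of rows with v_(-1) = (c0, d0), v_0 = (a0, b0) and
   v_(k+1) = x_k v_k - v_(k-1), where x_k lies outside K for k >= 1. *)
Inductive chain : nat -> R -> R -> R -> R -> Prop :=
  | chain0 : chain 0 c0 d0 a0 b0
  | chainS N w1 w2 v1 v2 x : chain N w1 w2 v1 v2 -> (N = 0%N \/ ~ inK x) ->
      chain N.+1 v1 v2 (x * v1 - w1) (x * v2 - w2).

Lemma chain_invertible N w1 w2 v1 v2 :
  chain N w1 w2 v1 v2 -> invertible_mx (mx2 w1 w2 v1 v2).
Proof. by elim=> // {}N {}w1 {}w2 {}v1 {}v2 x _ IH _; apply: invertible_step. Qed.

Lemma chainS_inv N w1 w2 v1 v2 : chain N.+1 w1 w2 v1 v2 ->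
  exists u1 u2 x, [/\ chain N u1 u2 w1 w2, N = 0%N \/ ~ inK x,
                     v1 = x * w1 - u1 & v2 = x * w2 - u2].
Proof. by move=> H; inversion H; subst; do 3 eexists; split; eauto. Qed.

Lemma chain_walk (t : R) : ~ inK t -> forall N, exists w1 w2 v1 v2,
  chain N w1 w2 v1 v2 /\ walk N (cyc a0 b0) (cyc v1 v2).
Proof.
move=> Ht; elim=> [|N [w1 [w2 [v1 [v2 [Hch Hw]]]]]].
  have [_ Hp _] := invertible_rows_distant base_invertible.
  by exists c0, d0, a0, b0; split; [exact: chain0 | exact: walk0].
have HchS := chainS Hch (or_intror Ht).
have [_ Hp Hd] := invertible_rows_distant (chain_invertible HchS).
by exists v1, v2, (t * v1 - w1), (t * v2 - w2); split => //; apply: walk_rcons Hw Hd Hp.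
Qed.

(* A point distant from the point of a chain term v_(N+1) is spanned by a
   term of index >= N of some (possibly different) chain: by
   [distant_neighbour] it is spanned by al v_N + be v_(N+1); for be = 0 this is
   v_N, and otherwise, with z = - al^-1 be, it is a unit multiple of
   v_(N+1) with x_N replaced by x_N - z^-1 (if z is a unit), or of the next
   term z v_(N+1) - v_N (if z lies outside K). *)
Lemma chain_neighbour N w1 w2 v1 v2 q q' :
  chain N.+1 w1 w2 v1 v2 -> represents q v1 v2 -> distant q q' ->
  exists M t1 t2 s1 s2, [/\ chain M t1 t2 s1 s2, represents q' s1 s2 & (N <= M)%N].
Proof.
move=> Hch Hq Hd.
have [al [be [Hal ->]]] :=
  distant_neighbour (right_inverse_unit Hdeg) (chain_invertible Hch) Hq Hd.
have [u1 [u2 [x [Hch' Hx Ev1 Ev2]]]] := chainS_inv Hch.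
have [be0|be_neq0] := eqVneq be 0.
  exists N, u1, u2, w1, w2; split => //.
  by exists al; rewrite // be0 !mul0r !addr0.
set z := - (al^-1 * be).
have Ebe : be = - (al * z) by rewrite /z mulrN opprK mulVKr.
clearbody z.
have next_term (w v : R) : al * w + - (al * z) * v = - al * (z * v - w).
  by rewrite mulrBr !mulNr opprK mulrA addrC.
case: (boolP (z \is a GRing.unit)) => Hz.
  have shifted_term (w u : R) :
      al * w + - (al * z) * (x * w - u) = - (al * z) * ((x - z^-1) * w - u).
    rewrite [(x - _) * w]mulrBl [x * w - _ - u]addrAC [RHS]mulrBr.
    by rewrite [- (al * z) * (z^-1 * w)]mulNr opprK [al * z * (z^-1 * w)]mulrA mulrK // [LHS]addrC.
  have Hx' : N = 0%N \/ ~ inK (x - z^-1).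
    case: Hx => [|HxK]; [by left | right].
    have Hzi : inK z^-1 by right; rewrite unitrV.
    exact (notK_subK Hdeg HxK Hzi).
  exists N.+1, w1, w2, ((x - z^-1) * w1 - u1), ((x - z^-1) * w2 - u2); split => //.
  - exact: chainS Hch' Hx'.
  - exists (- (al * z)); first by rewrite unitrN unitrMr.
    by rewrite Ebe Ev1 Ev2 !shifted_term.
have HzK : ~ inK z.
  case=> [z0|]; last by rewrite (negbTE Hz).
  by move: be_neq0; rewrite Ebe z0 mulr0 oppr0 eqxx.
exists N.+2, v1, v2, (z * v1 - w1), (z * v2 - w2); split => //.
- exact: chainS Hch (or_intror HzK).
- by exists (- al); rewrite ?unitrN // Ebe !next_term.
- exact: leqW.
Qed.

Variables X0 Z0 : R.
Hypothesis form_c0 : c0 * X0 + d0 * Z0 = 1.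
Hypothesis form_a0 : a0 * X0 + b0 * Z0 = 0.

(* The left-linear form given by the first column of the inverse of the
   base matrix: it sends (c0, d0) to 1 and (a0, b0) to 0. *)
Definition lform (r1 r2 : R) : R := r1 * X0 + r2 * Z0.

Lemma lform_scale e r1 r2 : lform (e * r1) (e * r2) = e * lform r1 r2.
Proof. by rewrite /lform mulrDr !mulrA. Qed.

Lemma lform_step x w1 w2 v1 v2 :
  lform (x * v1 - w1) (x * v2 - w2) = x * lform v1 v2 - lform w1 w2.
Proof. by rewrite /lform !mulrBl mulrDr !mulrA opprD addrACA. Qed.

Lemma chain_lform_deg N w1 w2 v1 v2 : chain N w1 w2 v1 v2 ->
  [/\ N = 0%N, lform w1 w2 = 1 & lform v1 v2 = 0] \/
  (0 < N)%N /\ deg_lt (deg (lform w1 w2)) (deg (lform v1 v2)).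
Proof.
elim=> [|{}N {}w1 {}w2 {}v1 {}v2 x _ IH Hx]; first by left.
right; split => //; rewrite lform_step.
case: IH => [[_ -> ->]|[HN Hlt]].
  by rewrite mulr0 add0r (deg0 Hdeg) (deg_unit Hdeg (unitrN1 _)).
by case: Hx => [N0|HxK]; [rewrite N0 in HN | exact: deg_lt_step].
Qed.

Lemma chain_base_point N w1 w2 v1 v2 :
  chain N w1 w2 v1 v2 -> represents (cyc a0 b0) v1 v2 -> N = 0%N.
Proof.
move=> Hch [e He Eq].
have [r [Ev1 Ev2]] : cyc a0 b0 (e * v1, e * v2) by rewrite Eq; exact: cyc_self.
have form0 : lform v1 v2 = 0.
  by apply: (mulrI He); rewrite -lform_scale Ev1 Ev2 lform_scale /lform form_a0 !mulr0.
case: (chain_lform_deg Hch) => [[] //|[_]].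
by rewrite form0 (deg0 Hdeg); case: (deg _).
Qed.

(* Walking from the point of the N-th chain term to the base point takes at
   least N steps: each step lowers the chain index by at most one. *)
Lemma chain_walk_length k q N w1 w2 v1 v2 :
  walk k q (cyc a0 b0) -> chain N w1 w2 v1 v2 -> represents q v1 v2 -> (N <= k)%N.
Proof.
elim: k q N w1 w2 v1 v2 => [|k IH] q N w1 w2 v1 v2 Hw Hch Hq.
  by rewrite (walk0_eq Hw) in Hq; rewrite (chain_base_point Hch Hq).
case: N Hch => [//|N] Hch.
have [q' Hd Hw'] := walkS_first Hw.
have [M [t1 [t2 [s1 [s2 [HchM Hq' HNM]]]]]] := chain_neighbour Hch Hq Hd.
exact: leq_trans HNM (IH _ _ _ _ _ _ Hw' HchM Hq').
Qed.

End Chains.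

(* The base point and the point of the (n+1)-st term of a chain are connected
   by a walk of length n + 1, but by none of length <= n. *)
Theorem mainTheorem11 (R : unitRingType) (deg : R -> option nat)
  (HK : K_is_field R) (Hdeg : is_degree_function deg)
  (HRK : exists r : R, ~ inK r) :
  forall p : R * R -> Prop, is_point p ->
  forall n : nat, exists q r : R * R -> Prop,
    [/\ connected p q, connected p r & ~ dist_le q r n].
Proof.
move=> _ [a0 [b0 [[c0 [d0 /invertible2P Hab]] ->]]] n.
have Hbase := invertible_swap Hab.
have [X0 [_ [Z0 [_ [form_c0 _ form_a0 _]]]]] := invertible_rinv Hbase.
have [t Ht] := HRK.
have [w1 [w2 [v1 [v2 [Hch Hw]]]]] := chain_walk Hbase Ht n.+1.
have [_ Hp _] := invertible_rows_distant Hbase.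
exists (cyc a0 b0), (cyc v1 v2); split; [by exists 0%N; exact: walk0 | by exists n.+1 |].
move=> [m Hmn /walk_rev Hw'].
have := chain_walk_length Hdeg Hbase form_c0 form_a0 Hw' Hch (represents_self v1 v2).
by rewrite ltnNge Hmn.
Qed.
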